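(* Let $\sigma>0$ and $\beta(s):=\exp\Big(-\frac{((\log s-\sigma^{2}/2)_{+})^{2}}{2\sigma^{2}}\Big)$ for $s>0$. Let $K(u)=u\beta(1/u)$ for $u>0$, $K(0)=0$, $K^{*}(v)=\sup_{u\ge0}\{uv-K(u)\}$, and $F(w):=\int_{w}^{1}\frac{\mathrm{d}v}{K^{*}(v)}$ for $w\in(0,1]$, with inverse function $F^{-1}$. Then for all $x>0$, \[ F^{-1}(x)\le2\exp\Big\{-\frac{1}{2\sigma^{2}}\mathsf{W}^{2}\Big(\frac{x\sigma^{2}}{2\exp(\sigma^{2}/2)}\Big)\Big\}, \] where $\mathsf{W}$ is the Lambert W function on $[0,\infty)$ (the inverse of $x\mapsto xe^{x}$) and $\mathsf{W}^{2}$ its square.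
   Context: $(t)_{+}=\max(t,0)$. *)

From Stdlib Require Import Reals Lra ClassicalEpsilon.
From Coquelicot Require Import Coquelicot.
Open Scope R_scope.

Definition pos_part (t : R) : R := Rmax t 0.

Definition beta (sigma s : R) : R :=
  exp (- ((pos_part (ln s - sigma ^ 2 / 2)) ^ 2) / (2 * sigma ^ 2)).

(* K(u) = u beta(1/u) for u > 0, K(0) = 0 (only used for u >= 0) *)
Definition Kf (sigma u : R) : R :=
  if Rle_dec u 0 then 0 else u * beta sigma (/ u).

Definition Kstar (sigma v : R) : Rbar :=
  Lub_Rbar (fun y => exists u, 0 <= u /\ y = u * v - Kf sigma u).

Definition Ff (sigma w : R) : R :=
  RInt (fun v => / real (Kstar sigma v)) w 1.

Definition Finv (sigma x : R) : R :=
  epsilon (inhabits 0) (fun w => 0 < w <= 1 /\ Ff sigma w = x).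

Definition LambertW (y : R) : R :=
  epsilon (inhabits 0) (fun w => 0 <= w /\ w * exp w = y).

(** Write [T(v) = sqrt (2 ln (2/v))].  Testing the supremum defining [K*(v)] at
    [u = exp (-(sigma^2/2 + sigma T(v)))] gives
    [K*(v) >= (v/2) exp (-(sigma^2/2 + sigma T(v)))], and [exp (sigma T(v)) / v] has
    the explicit primitive [-Q(T(v))] with [Q(t) = exp (sigma t) (t/sigma - 1/sigma^2)].
    Hence [F(w) <= (2 exp (sigma^2/2) / sigma^2) s e^s] with [s = sigma T(w)].  At the
    claimed bound [B] one has [sigma T(B) = W(y)], so [F(B) <= x = F(F^{-1}(x))]; since
    [K*(v) <= v <= 1], [F] decreases at rate at least [1], which forces [F^{-1}(x) <= B]. *)

From Stdlib Require Import Reals Lra ClassicalEpsilon.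
From Coquelicot Require Import Coquelicot.
Open Scope R_scope.

Lemma Kf_0 (sigma : R) : Kf sigma 0 = 0.
Proof. unfold Kf; destruct (Rle_dec 0 0); lra. Qed.

Lemma Kf_ge0 (sigma u : R) : 0 <= u -> 0 <= Kf sigma u.
Proof.
  intros Hu; unfold Kf; destruct (Rle_dec u 0); [lra |].
  unfold beta; pose proof (exp_pos (- pos_part (ln (/ u) - sigma ^ 2 / 2) ^ 2 / (2 * sigma ^ 2))).
  nra.
Qed.

Lemma Kf_ge1 (sigma u : R) : 1 <= u -> Kf sigma u = u.
Proof.
  intros Hu; unfold Kf; destruct (Rle_dec u 0); [lra |].
  assert (Hln : ln (/ u) <= 0).
  { rewrite ln_Rinv by lra. pose proof (ln_le 1 u). rewrite ln_1 in *. lra. }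
  unfold beta, pos_part.
  rewrite Rmax_right by (pose proof (pow2_ge_0 sigma); lra).
  replace (- 0 ^ 2 / (2 * sigma ^ 2)) with 0 by (unfold Rdiv; ring).
  rewrite exp_0; ring.
Qed.

Lemma exp_mul_1_sub_le1 (s : R) : exp s * (1 - s) <= 1.
Proof.
  pose proof (exp_ineq1_le (- s)). pose proof (exp_pos s).
  assert (exp s * exp (- s) = 1) by (rewrite <- exp_plus, Rplus_opp_r, exp_0; reflexivity).
  nra.
Qed.

Definition clamp (a b v : R) : R := Rmax a (Rmin v b).

Lemma clamp_in (a b v : R) : a <= b -> a <= clamp a b v <= b.
Proof. intros; unfold clamp, Rmax, Rmin; repeat destruct Rle_dec; lra. Qed.

Lemma clamp_id (a b v : R) : a <= v <= b -> clamp a b v = v.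
Proof. intros; unfold clamp, Rmax, Rmin; repeat destruct Rle_dec; lra. Qed.

Lemma clamp_lipschitz (a b v v' : R) :
  a <= b -> Rabs (clamp a b v - clamp a b v') <= Rabs (v - v').
Proof.
  intros; apply Rabs_le; unfold clamp, Rmax, Rmin; repeat destruct Rle_dec;
  match goal with |- context [Rabs ?z] => destruct (Rcase_abs z);
    [rewrite (Rabs_left z) by lra | rewrite (Rabs_right z) by lra] end; lra.
Qed.

Lemma lipschitz1_continuous (f : R -> R) (z : R) :
  (forall x y, Rabs (f x - f y) <= Rabs (x - y)) -> continuous f z.
Proof.
  intros Hf. apply continuity_pt_filterlim.
  intros eps Heps. exists eps. split; [lra |].
  intros x [_ Hx]. simpl in *. unfold R_dist in *.
  eapply Rle_lt_trans; [apply Hf | exact Hx].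
Qed.

Lemma LambertW_spec (y : R) : 0 <= y -> 0 <= LambertW y /\ LambertW y * exp (LambertW y) = y.
Proof.
  intros Hy. apply (epsilon_spec (inhabits 0) (fun w => 0 <= w /\ w * exp w = y)).
  assert (Hey : 1 <= exp y) by (pose proof (exp_ineq1_le y); lra).
  destruct (IVT_gen (fun w => w * exp w) 0 y y) as [w [Hw Hwy]].
  - intro t. apply continuity_pt_mult; [apply continuity_pt_id |].
    apply derivable_continuous_pt, derivable_pt_exp.
  - rewrite Rmult_0_l, Rmin_left, Rmax_right; nra.
  - rewrite Rmin_left, Rmax_right in Hw by lra. exists w; split; [lra | exact Hwy].
Qed.

Section Conjugate.

Variable sigma : R.
Hypothesis sigma_pos : 0 < sigma.

Definition Kstar_set (v : R) : R -> Prop :=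
  fun y => exists u, 0 <= u /\ y = u * v - Kf sigma u.

Definition kstar (v : R) : R := real (Kstar sigma v).

Lemma Kstar_set_le (v y : R) : 0 <= v <= 1 -> Kstar_set v y -> y <= v.
Proof.
  intros Hv [u [Hu ->]].
  destruct (Rle_lt_dec u 1).
  - pose proof (Kf_ge0 sigma u Hu). nra.
  - rewrite Kf_ge1 by lra. nra.
Qed.

Lemma Kstar_finite (v : R) :
  0 <= v <= 1 -> Kstar sigma v = Finite (kstar v) /\ 0 <= kstar v <= v.
Proof.
  intros Hv. unfold kstar, Kstar.
  destruct (Lub_Rbar_correct (Kstar_set v)) as [Hub Hlub].
  assert (H0 : Rbar_le 0 (Lub_Rbar (Kstar_set v))).
  { apply Hub. exists 0. rewrite Kf_0. split; [lra | ring]. }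
  assert (H1 : Rbar_le (Lub_Rbar (Kstar_set v)) v).
  { apply Hlub. intros y Hy. now apply Kstar_set_le. }
  fold (Kstar_set v).
  destruct (Lub_Rbar (Kstar_set v)); simpl in *; try contradiction.
  split; [reflexivity | lra].
Qed.

Lemma kstar_ge (v y : R) : 0 <= v <= 1 -> Kstar_set v y -> y <= kstar v.
Proof.
  intros Hv Hy. destruct (Kstar_finite v Hv) as [Hk _].
  destruct (Lub_Rbar_correct (Kstar_set v)) as [Hub _].
  specialize (Hub y Hy). unfold Kstar in Hk. fold (Kstar_set v) in Hk.
  rewrite Hk in Hub. exact Hub.
Qed.

Lemma kstar_le (v b : R) :
  0 <= v <= 1 -> (forall y, Kstar_set v y -> y <= b) -> kstar v <= b.
Proof.
  intros Hv Hb. destruct (Kstar_finite v Hv) as [Hk _].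
  destruct (Lub_Rbar_correct (Kstar_set v)) as [_ Hlub].
  assert (H : Rbar_le (Lub_Rbar (Kstar_set v)) b) by (apply Hlub; intros y Hy; simpl; auto).
  unfold Kstar in Hk. fold (Kstar_set v) in Hk. rewrite Hk in H. exact H.
Qed.

Lemma kstar_le_shift (v v' : R) :
  0 <= v <= 1 -> 0 <= v' <= 1 -> kstar v <= kstar v' + Rabs (v - v').
Proof.
  intros Hv Hv'. apply kstar_le; auto.
  intros y [u [Hu ->]].
  pose proof (proj2 (Kstar_finite v' Hv')).
  pose proof (Rle_abs (v - v')). pose proof (Rabs_pos (v - v')).
  destruct (Rle_lt_dec u 1).
  - assert (u * v' - Kf sigma u <= kstar v') by (apply kstar_ge; auto; exists u; auto).
    assert (u * (v - v') <= Rabs (v - v')) by (destruct (Rle_lt_dec 0 (v - v')); nra).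
    lra.
  - rewrite Kf_ge1 by lra. nra.
Qed.

Lemma kstar_lipschitz (v v' : R) :
  0 <= v <= 1 -> 0 <= v' <= 1 -> Rabs (kstar v - kstar v') <= Rabs (v - v').
Proof.
  intros Hv Hv'. pose proof (kstar_le_shift v v' Hv Hv'). pose proof (kstar_le_shift v' v Hv' Hv).
  rewrite (Rabs_minus_sym v' v) in *. apply Rabs_le. lra.
Qed.

Definition gauss_level (v : R) : R := sqrt (2 * ln (2 / v)).

Lemma ln_2_div_pos (v : R) : 0 < v <= 1 -> 0 < ln (2 / v).
Proof.
  intros Hv. rewrite <- ln_1. apply ln_increasing; [lra |].
  apply (Rmult_lt_reg_r v); [lra |]. unfold Rdiv. rewrite Rmult_assoc, Rinv_l; lra.
Qed.

(* [u] is chosen so that [beta (1/u) = exp (- gauss_level v ^ 2 / 2) = v / 2]. *)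
Lemma kstar_lower (v : R) :
  0 < v <= 1 -> v / 2 * exp (- (sigma ^ 2 / 2 + sigma * gauss_level v)) <= kstar v.
Proof.
  intros Hv. set (c := sigma ^ 2 / 2 + sigma * gauss_level v).
  apply Rle_trans with (exp (- c) * v - Kf sigma (exp (- c))).
  2: { apply kstar_ge; [lra |]. exists (exp (- c)). split; [left; apply exp_pos | reflexivity]. }
  pose proof (ln_2_div_pos v Hv) as Hln.
  assert (HT : 0 <= gauss_level v) by apply sqrt_pos.
  assert (HT2 : gauss_level v ^ 2 = 2 * ln (2 / v)) by (apply pow2_sqrt; lra).
  unfold Kf. destruct (Rle_dec (exp (- c)) 0) as [H | _]; [pose proof (exp_pos (- c)); lra |].
  unfold beta, pos_part. rewrite exp_Ropp, Rinv_inv, ln_exp.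
  unfold c. replace (sigma ^ 2 / 2 + sigma * gauss_level v - sigma ^ 2 / 2)
    with (sigma * gauss_level v) by ring.
  rewrite Rmax_left by nra.
  replace (- (sigma * gauss_level v) ^ 2 / (2 * sigma ^ 2)) with (- ln (2 / v))
    by (rewrite Rpow_mult_distr, HT2; field; lra).
  rewrite exp_Ropp, exp_ln by (apply Rdiv_lt_0_compat; lra).
  fold c. right. field. split; [lra | apply Rgt_not_eq, exp_pos].
Qed.

Lemma kstar_pos (v : R) : 0 < v <= 1 -> 0 < kstar v.
Proof.
  intros Hv. eapply Rlt_le_trans; [| apply kstar_lower; auto].
  apply Rmult_lt_0_compat; [lra | apply exp_pos].
Qed.

Lemma kstar_inv_le (v : R) :
  0 < v <= 1 -> / kstar v <= 2 * exp (sigma ^ 2 / 2) * exp (sigma * gauss_level v) / v.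
Proof.
  intros Hv. pose proof (exp_pos (sigma ^ 2 / 2)). pose proof (exp_pos (sigma * gauss_level v)).
  eapply Rle_trans.
  { apply Rinv_le_contravar; [| apply kstar_lower; exact Hv].
    apply Rmult_lt_0_compat; [lra | apply exp_pos]. }
  right. rewrite exp_Ropp, exp_plus. field. lra.
Qed.

Lemma kstar_inv_ge1 (v : R) : 0 < v <= 1 -> 1 <= / kstar v.
Proof.
  intros Hv. pose proof (proj2 (Kstar_finite v ltac:(lra))). pose proof (kstar_pos v Hv).
  rewrite <- Rinv_1. apply Rinv_le_contravar; lra.
Qed.

(* Extends [/ kstar] continuously from [[a, 1]] to all of [R], so that the
   (global) intermediate value theorem applies to [F]. *)
Definition kstar_inv_ext (a v : R) : R := / kstar (clamp a 1 v).

Lemma kstar_inv_ext_continuous (a z : R) : 0 < a <= 1 -> continuous (kstar_inv_ext a) z.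
Proof.
  intros Ha. apply continuous_Rinv_comp.
  - apply (lipschitz1_continuous (fun v => kstar (clamp a 1 v))).
    intros x y. pose proof (clamp_in a 1 x). pose proof (clamp_in a 1 y).
    eapply Rle_trans; [apply kstar_lipschitz; lra |]. apply clamp_lipschitz; lra.
  - pose proof (clamp_in a 1 z). pose proof (kstar_pos (clamp a 1 z)). lra.
Qed.

Lemma ex_RInt_kstar_inv_ext (a b c : R) : 0 < a <= 1 -> ex_RInt (kstar_inv_ext a) b c.
Proof.
  intros. apply (ex_RInt_continuous (V := R_CompleteNormedModule)).
  intros; now apply kstar_inv_ext_continuous.
Qed.

Lemma ex_RInt_kstar_inv (a b : R) : 0 < a -> a <= b <= 1 -> ex_RInt (fun v => / kstar v) a b.
Proof.
  intros Ha Hab. apply (ex_RInt_ext (kstar_inv_ext a)); [| apply ex_RInt_kstar_inv_ext; lra].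
  intros v Hv. rewrite Rmin_left, Rmax_right in Hv by lra.
  unfold kstar_inv_ext. rewrite clamp_id by lra. reflexivity.
Qed.

Lemma Ff_eq_RInt_kstar_inv_ext (a w : R) :
  0 < a <= w -> w <= 1 -> Ff sigma w = RInt (kstar_inv_ext a) w 1.
Proof.
  intros. apply RInt_ext. intros v Hv. rewrite Rmin_left, Rmax_right in Hv by lra.
  unfold kstar_inv_ext. rewrite clamp_id by lra. reflexivity.
Qed.

Lemma continuous_RInt_kstar_inv_ext (a : R) :
  0 < a <= 1 -> continuity (fun w => RInt (kstar_inv_ext a) w 1).
Proof.
  intros Ha w. apply continuity_pt_filterlim.
  apply (ex_derive_continuous (K := R_AbsRing) (V := R_NormedModule)
           (fun w => RInt (kstar_inv_ext a) w 1)).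
  eexists. apply (is_derive_RInt' (kstar_inv_ext a) (fun w => RInt (kstar_inv_ext a) w 1) w 1).
  - apply filter_forall. intros.
    apply (RInt_correct (V := R_CompleteNormedModule)), ex_RInt_kstar_inv_ext; auto.
  - apply kstar_inv_ext_continuous; auto.
Qed.

Lemma Ff_ge_neg_ln (w : R) : 0 < w <= 1 -> - ln w <= Ff sigma w.
Proof.
  intros Hw.
  assert (Hln : is_RInt (fun v => / v) w 1 (ln 1 - ln w)).
  { apply (is_RInt_derive (V := R_CompleteNormedModule) ln (fun v => / v));
      intros v Hv; rewrite Rmin_left, Rmax_right in Hv by lra.
    - apply is_derive_ln. lra.
    - apply continuous_Rinv. lra. }
  replace (- ln w) with (ln 1 - ln w) by (rewrite ln_1; ring).
  rewrite <- (is_RInt_unique _ _ _ _ Hln).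
  apply RInt_le; [lra | eexists; exact Hln | apply ex_RInt_kstar_inv; lra |].
  intros v Hv. change (/ v <= / kstar v). pose proof (proj2 (Kstar_finite v ltac:(lra))).
  apply Rinv_le_contravar; [apply kstar_pos |]; lra.
Qed.

Lemma Ff_surjective (x : R) : 0 < x -> exists w, (0 < w <= 1) /\ Ff sigma w = x.
Proof.
  intros Hx. set (a := exp (- x)).
  assert (Ha : 0 < a < 1).
  { split; [apply exp_pos |]. unfold a. rewrite <- exp_0. apply exp_increasing. lra. }
  assert (Hxa : x <= Ff sigma a).
  { replace x with (- ln a) by (unfold a; rewrite ln_exp; ring). apply Ff_ge_neg_ln; lra. }
  destruct (IVT_gen _ a 1 x (continuous_RInt_kstar_inv_ext a ltac:(lra))) as [w [Hw Hwx]].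
  - rewrite (RInt_point (V := R_CompleteNormedModule)).
    rewrite <- (Ff_eq_RInt_kstar_inv_ext a a) by lra.
    change (@zero R_CompleteNormedModule) with 0. rewrite Rmin_right, Rmax_left; lra.
  - rewrite Rmin_left, Rmax_right in Hw by lra.
    exists w. split; [lra |]. rewrite (Ff_eq_RInt_kstar_inv_ext a) by lra. exact Hwx.
Qed.

Lemma Finv_spec (x : R) : 0 < x -> (0 < Finv sigma x <= 1) /\ Ff sigma (Finv sigma x) = x.
Proof.
  intros Hx. exact (epsilon_spec (inhabits 0) _ (Ff_surjective x Hx)).
Qed.

Lemma Ff_gap (a b : R) : 0 < a <= b -> b <= 1 -> Ff sigma b + (b - a) <= Ff sigma a.
Proof.
  intros Hab Hb.
  assert (Hchasles : RInt (fun v => / kstar v) a b + Ff sigma b = Ff sigma a).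
  { apply (RInt_Chasles (V := R_CompleteNormedModule)); apply ex_RInt_kstar_inv; lra. }
  assert (Hconst : RInt (fun _ => 1) a b = b - a).
  { rewrite (RInt_const (V := R_CompleteNormedModule)).
    unfold scal; simpl. unfold mult; simpl. ring. }
  assert (b - a <= RInt (fun v => / kstar v) a b).
  { rewrite <- Hconst.
    apply RInt_le; [lra | apply (ex_RInt_const (V := R_CompleteNormedModule)) |
                    apply ex_RInt_kstar_inv; lra |].
    intros v Hv. apply kstar_inv_ge1. lra. }
  lra.
Qed.

Definition level_primitive (t : R) : R := exp (sigma * t) * (t / sigma - 1 / sigma ^ 2).

Lemma is_derive_level_primitive (c v : R) :
  0 < v <= 1 ->
  is_derive (fun v => - (c * level_primitive (gauss_level v))) v
    (c * exp (sigma * gauss_level v) / v).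
Proof.
  intros Hv. pose proof (ln_2_div_pos v Hv) as Hln. unfold Rdiv in Hln.
  unfold level_primitive, gauss_level. auto_derive.
  - repeat split; try lra; apply Rmult_lt_0_compat; try lra; apply Rinv_0_lt_compat; lra.
  - assert (0 < sqrt (2 * ln (2 * / v))) by (apply sqrt_lt_R0; lra).
    unfold Rdiv. field. lra.
Qed.

Lemma Ff_le_level_primitive (w : R) :
  0 < w <= 1 ->
  Ff sigma w <= 2 * exp (sigma ^ 2 / 2) *
                (level_primitive (gauss_level w) - level_primitive (gauss_level 1)).
Proof.
  intros Hw. set (c := 2 * exp (sigma ^ 2 / 2)).
  set (h := fun v => c * exp (sigma * gauss_level v) / v).
  set (G := fun v => - (c * level_primitive (gauss_level v))).
  assert (Hh : is_RInt h w 1 (c * (level_primitive (gauss_level w) -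
                                   level_primitive (gauss_level 1)))).
  { replace (c * _) with (minus (G 1) (G w)) by (unfold G, minus, plus, opp; simpl; ring).
    apply (is_RInt_derive (V := R_CompleteNormedModule) G h); intros v Hv;
      rewrite Rmin_left, Rmax_right in Hv by lra.
    - apply is_derive_level_primitive. lra.
    - apply (ex_derive_continuous (K := R_AbsRing) (V := R_NormedModule)).
      pose proof (ln_2_div_pos v ltac:(lra)) as Hln. unfold Rdiv in Hln.
      unfold h, gauss_level. auto_derive.
      repeat split; try lra; apply Rmult_lt_0_compat; try lra; apply Rinv_0_lt_compat; lra. }
  rewrite <- (is_RInt_unique _ _ _ _ Hh).
  apply RInt_le; [lra | apply ex_RInt_kstar_inv; lra | eexists; exact Hh |].
  intros v Hv. apply kstar_inv_le. lra.
Qed.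

Lemma level_primitive_ge (t : R) : - (1 / sigma ^ 2) <= level_primitive t.
Proof.
  pose proof (exp_mul_1_sub_le1 (sigma * t)).
  assert (Hs2 : 0 < sigma ^ 2) by (apply pow_lt; lra).
  unfold level_primitive.
  replace (exp (sigma * t) * (t / sigma - 1 / sigma ^ 2))
    with (- (exp (sigma * t) * (1 - sigma * t)) / sigma ^ 2) by (field; lra).
  unfold Rdiv. rewrite !Ropp_mult_distr_l_reverse. apply Ropp_le_contravar.
  apply Rmult_le_compat_r; [left; apply Rinv_0_lt_compat |]; lra.
Qed.

Lemma Ff_le (w : R) :
  0 < w <= 1 ->
  Ff sigma w <= 2 * exp (sigma ^ 2 / 2) / sigma ^ 2 *
                (sigma * gauss_level w * exp (sigma * gauss_level w)).
Proof.
  intros Hw. pose proof (Ff_le_level_primitive w Hw).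
  pose proof (level_primitive_ge (gauss_level 1)).
  pose proof (exp_pos (sigma ^ 2 / 2)).
  assert (Hs2 : 0 < sigma ^ 2) by (apply pow_lt; lra).
  set (s := sigma * gauss_level w) in *.
  assert (Hs : 1 <= exp s).
  { pose proof (exp_ineq1_le s). pose proof (sqrt_pos (2 * ln (2 / w))).
    assert (0 <= s) by (unfold s, gauss_level; nra). lra. }
  assert (level_primitive (gauss_level w) + 1 / sigma ^ 2 <= s * exp s / sigma ^ 2).
  { assert (Hgw : gauss_level w = s / sigma) by (unfold s; field; lra).
    unfold level_primitive. fold s. rewrite Hgw.
    replace (exp s * (s / sigma / sigma - 1 / sigma ^ 2) + 1 / sigma ^ 2)
      with ((s * exp s - (exp s - 1)) / sigma ^ 2) by (field; lra).
    unfold Rdiv. apply Rmult_le_compat_r; [left; apply Rinv_0_lt_compat |]; lra. }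
  replace (2 * exp (sigma ^ 2 / 2) / sigma ^ 2 * (s * exp s))
    with (2 * exp (sigma ^ 2 / 2) * (s * exp s / sigma ^ 2)) by (field; lra).
  eapply Rle_trans; [eassumption |]. apply Rmult_le_compat_l; lra.
Qed.

Lemma gauss_level_at (W : R) :
  0 <= W -> sigma * gauss_level (2 * exp (- (1 / (2 * sigma ^ 2)) * W ^ 2)) = W.
Proof.
  intros HW. unfold gauss_level.
  replace (2 / (2 * exp (- (1 / (2 * sigma ^ 2)) * W ^ 2)))
    with (exp (1 / (2 * sigma ^ 2) * W ^ 2))
    by (rewrite Ropp_mult_distr_l_reverse, exp_Ropp; field; apply Rgt_not_eq, exp_pos).
  rewrite ln_exp.
  replace (2 * (1 / (2 * sigma ^ 2) * W ^ 2)) with ((W / sigma) ^ 2) by (field; lra).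
  rewrite sqrt_pow2 by (apply Rdiv_le_0_compat; lra). field. lra.
Qed.

End Conjugate.

Theorem lemma54 (sigma : R) (hsigma : 0 < sigma) (x : R) (hx : 0 < x) :
  Finv sigma x <=
  2 * exp (- (1 / (2 * sigma ^ 2)) *
           (LambertW (x * sigma ^ 2 / (2 * exp (sigma ^ 2 / 2)))) ^ 2).
Proof.
  destruct (Finv_spec sigma hsigma x hx) as [Hw HFw].
  pose proof (exp_pos (sigma ^ 2 / 2)).
  assert (Hs2 : 0 < sigma ^ 2) by (apply pow_lt; lra).
  set (y := x * sigma ^ 2 / (2 * exp (sigma ^ 2 / 2))).
  assert (Hy : 0 <= y) by (unfold y; apply Rmult_le_pos; [nra | left; apply Rinv_0_lt_compat; lra]).
  destruct (LambertW_spec y Hy) as [HW HWe].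
  set (B := 2 * exp (- (1 / (2 * sigma ^ 2)) * LambertW y ^ 2)).
  destruct (Rle_lt_dec 1 B) as [HB1 | HB1]; [lra |].
  assert (HB0 : 0 < B).
  { unfold B. pose proof (exp_pos (- (1 / (2 * sigma ^ 2)) * LambertW y ^ 2)). lra. }
  apply Rnot_lt_le. intros HBw.
  pose proof (Ff_gap sigma hsigma B (Finv sigma x) ltac:(lra) ltac:(lra)) as Hgap.
  pose proof (Ff_le sigma hsigma B ltac:(lra)) as Hup.
  unfold B in Hup. rewrite (gauss_level_at sigma hsigma _ HW), HWe in Hup. fold B in Hup.
  assert (Hx : 2 * exp (sigma ^ 2 / 2) / sigma ^ 2 * y = x) by (unfold y; field; lra).
  lra.
Qed.
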